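(* In a generalised differential Seely category, let $g:X\times\mathcal U(A)\to\mathcal U(B)$ be a morphism of $\mathscr C$ such that $g=⦃(f,u)⦄;\pi_2$ for some morphism $(f,u):(X,A)\to(Y,B)$ of $LS(\mathscr C)$. Then $\mathrm D_2(g)=\pi_1^*(\mathrm{id}_X,u)$, where $\pi_1:X\times\mathcal U(A)\to X$.
   Context: Composition is diagrammatic; monoidal categories are strict. Setting: an LNL adjunction $\mathcal F\dashv\mathcal U$, $\mathcal F:\mathscr C\to\mathcal L$, between cartesian $(\mathscr C,\times,I)$ and symmetric monoidal $(\mathcal L,\otimes,1)$; $\mathcal U$ lax monoidal via $n_{A,B}:\mathcal U(A)\times\mathcal U(B)\to\mathcal U(A\otimes B)$; $\mathcal F$ strong monoidal via isomorphisms $m_{X,Y}$, $m_1$; unit $\eta$; $\mathbf c_X:=\mathcal F(\Delta_X);m_{X,X}^{-1}$, $\mathbf w_X:=\mathcal F(t_X);m_1^{-1}$. $LS(\mathscr C)$: objects $(X,A)$; morphisms $(f,u):(X,A)\to(Y,B)$ with $f:X\to Y$, $u:\mathcal F(X)\otimes A\to B$; composition $(f,u);(g,v)=(f;g,(\mathbf c_X\otimes\mathrm{id}_A);(\mathcal F(f)\otimes u);v)$; identity $(\mathrm{id}_X,\mathbf w_X\otimes\mathrm{id}_A)$; $\mathbf{ls}(f,u)=f$; fibre over $X$ = morphisms $(\mathrm{id}_X,u)$; reindexing along $h:X'\to X$: $h^*(X,B)=(X',B)$, $h^*(\mathrm{id}_X,v)=(\mathrm{id}_{X'},(\mathcal F(h)\otimes\mathrm{id}_B);v)$.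 With biproducts $\oplus$ in $\mathcal L$: fibrewise injections $\iota^X_i=(\mathrm{id}_X,\mathbf w_X\otimes\iota_i)$; products in $LS(\mathscr C)$: $(X\times Y,A\oplus B)$, projections $(\pi_i,\mathbf w_{X\times Y}\otimes\pi_i)$. GDSC: $\mathcal L$ additive (CMon-enriched, $\otimes$ bilinear) with finite products, and a functor $\mathcal T:\mathscr C\to LS(\mathscr C)$ with: (t.1) $\mathbf{ls}\circ\mathcal T=\mathrm{id}$, so $\mathcal T(X)=(X,\lambda(X))$, and $\varphi_{X,Y}:=\langle\mathcal T(\pi_1),\mathcal T(\pi_2)\rangle:\mathcal T(X\times Y)\to(X\times Y,\lambda(X)\oplus\lambda(Y))$ is an isomorphism; (t.2) $\mathcal T(\mathcal U(A))=(\mathcal U(A),A)$; (t.3) with $i^{X,Y}_2:=\iota^{X\times Y}_2;\varphi^{-1}_{X,Y}$, comprehension $⦃(f,u)⦄:=\langle\pi_1;f,(\eta_X\times\mathrm{id}_{\mathcal U(A)});n_{\mathcal F(X),A};\mathcal U(u)\rangle:X\times\mathcal U(A)\to Y\times\mathcal U(B)$, weakening $W(f,u):=(⦃(f,u)⦄,(\mathcal F(\pi_1)\otimes\mathrm{id}_A);u)$: $W(f,u);i^{Y,\mathcal U(B)}_2=i^{X,\mathcal U(A)}_2;\mathcal T(⦃(f,u)⦄)$. Differential: for $h:X\to Y$ with $\mathcal T(h)=(h,v)$, $\mathrm D(h):=(\mathrm{id}_X,v)$. Partial differential: for $h:X\times Y\to Z$, $\mathrm D_2(h):=i^{X,Y}_2;\mathrm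 D(h):(X\times Y,\lambda(Y))\to(X\times Y,\lambda(Z))$. *)

(* Composition is
   diagrammatic: f ;; g means "first f then g". *)
Set Implicit Arguments.
Unset Strict Implicit.

Record Cat := {
  ob : Type;
  hom : ob -> ob -> Type;
  idm : forall a, hom a a;
  comp : forall a b c, hom a b -> hom b c -> hom a c;
  comp_idl : forall a b (f : hom a b), comp (idm a) f = f;
  comp_idr : forall a b (f : hom a b), comp f (idm b) = f;
  comp_assoc : forall a b c d (f : hom a b) (g : hom b c) (h : hom c d),
      comp (comp f g) h = comp f (comp g h)
}.
Arguments hom {_} _ _.
Arguments idm {_} a.
Arguments comp {_ _ _ _} _ _.
Notation "f ;; g" := (comp f g) (at level 40, left associativity).

(** identity morphism obtained from an equality of objects (used to express
    strictness of the monoidal structure) *)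
Definition idc {C : Cat} {a b : ob C} (e : a = b) : hom a b :=
  match e in _ = b' return hom a b' with eq_refl => idm a end.

Record Functor (C D : Cat) := {
  fob : ob C -> ob D;
  fmap : forall a b, @hom C a b -> @hom D (fob a) (fob b);
  fmap_id : forall a, fmap (idm a) = idm (fob a);
  fmap_comp : forall a b c (f : @hom C a b) (g : @hom C b c),
      fmap (f ;; g) = fmap f ;; fmap g
}.
Arguments fob {C D} _ _.
Arguments fmap {C D} _ {a b} _.

Record Cartesian (C : Cat) := {
  cprod : ob C -> ob C -> ob C;
  cp1 : forall X Y, hom (cprod X Y) X;
  cp2 : forall X Y, hom (cprod X Y) Y;
  cpair : forall Z X Y, hom Z X -> hom Z Y -> hom Z (cprod X Y);
  cpair_p1 : forall Z X Y (f : hom Z X) (g : hom Z Y), cpair f g ;; cp1 X Y = f;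
  cpair_p2 : forall Z X Y (f : hom Z X) (g : hom Z Y), cpair f g ;; cp2 X Y = g;
  cpair_uniq : forall Z X Y (h : hom Z (cprod X Y)),
      h = cpair (h ;; cp1 X Y) (h ;; cp2 X Y);
  cterm : ob C;
  cbang : forall X, hom X cterm;
  cbang_uniq : forall X (h : hom X cterm), h = cbang X
}.
Arguments cprod {C} _ _ _.
Arguments cp1 {C} _ _ _.
Arguments cp2 {C} _ _ _.
Arguments cpair {C} _ {Z X Y} _ _.
Arguments cterm {C} _.
Arguments cbang {C} _ _.

Section CartesianDefs.
Context {C : Cat} (CC : Cartesian C).
Definition cfprod {X X' Y Y'} (f : hom X X') (g : hom Y Y')
  : hom (cprod CC X Y) (cprod CC X' Y') :=
  cpair CC (cp1 CC X Y ;; f) (cp2 CC X Y ;; g).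
Definition cdiag (X : ob C) : hom X (cprod CC X X) := cpair CC (idm X) (idm X).
Definition cswap (X Y : ob C) : hom (cprod CC X Y) (cprod CC Y X) :=
  cpair CC (cp2 CC X Y) (cp1 CC X Y).
Definition cassoc (X Y Z : ob C)
  : hom (cprod CC (cprod CC X Y) Z) (cprod CC X (cprod CC Y Z)) :=
  cpair CC (cp1 CC _ _ ;; cp1 CC X Y)
           (cpair CC (cp1 CC _ _ ;; cp2 CC X Y) (cp2 CC _ Z)).
End CartesianDefs.

(** Strictness: the object equalities (A⊗B)⊗C = A⊗(B⊗C), 1⊗A = A, A⊗1 = A
    hold, and the tensor of morphisms is strictly associative/unital, i.e.
    the identities induced by these object equalities are natural. *)
Record SMC (L : Cat) := {
  tens : ob L -> ob L -> ob L;
  unit : ob L;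
  tensm : forall A A' B B', hom A A' -> hom B B' -> hom (tens A B) (tens A' B');
  tens_id : forall A B, tensm (idm A) (idm B) = idm (tens A B);
  tens_comp : forall A A' A'' B B' B'' (f : hom A A') (f' : hom A' A'')
      (g : hom B B') (g' : hom B' B''),
      tensm (f ;; f') (g ;; g') = tensm f g ;; tensm f' g';
  assoc_ob : forall A B C, tens (tens A B) C = tens A (tens B C);
  lunit_ob : forall A, tens unit A = A;
  runit_ob : forall A, tens A unit = A;
  assoc_nat : forall A A' B B' C C' (f : hom A A') (g : hom B B') (h : hom C C'),
      tensm (tensm f g) h ;; idc (assoc_ob A' B' C')
      = idc (assoc_ob A B C) ;; tensm f (tensm g h);
  lunit_nat : forall A B (f : hom A B),
      tensm (idm unit) f ;; idc (lunit_ob B) = idc (lunit_ob A) ;; f;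
  runit_nat : forall A B (f : hom A B),
      tensm f (idm unit) ;; idc (runit_ob B) = idc (runit_ob A) ;; f;
  sym : forall A B, hom (tens A B) (tens B A);
  sym_nat : forall A A' B B' (f : hom A A') (g : hom B B'),
      tensm f g ;; sym A' B' = sym A B ;; tensm g f;
  sym_inv : forall A B, sym A B ;; sym B A = idm (tens A B);
  sym_hex : forall A B C,
      sym A (tens B C)
      = idc (eq_sym (assoc_ob A B C)) ;; tensm (sym A B) (idm C)
        ;; idc (assoc_ob B A C) ;; tensm (idm B) (sym A C)
        ;; idc (eq_sym (assoc_ob B C A))
}.
Arguments tens {L} _ _ _.
Arguments unit {L} _.
Arguments tensm {L} _ {A A' B B'} _ _.
Arguments assoc_ob {L} _ _ _ _.
Arguments lunit_ob {L} _ _.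
Arguments runit_ob {L} _ _.
Arguments sym {L} _ _ _.

Record Additive (L : Cat) (M : SMC L) := {
  zero : forall A B : ob L, hom A B;
  add : forall A B : ob L, hom A B -> hom A B -> hom A B;
  add_assoc : forall A B (f g h : hom A B), add (add f g) h = add f (add g h);
  add_comm : forall A B (f g : hom A B), add f g = add g f;
  add_0l : forall A B (f : hom A B), add (zero A B) f = f;
  comp_0l : forall A B C (g : hom B C), zero A B ;; g = zero A C;
  comp_0r : forall A B C (f : hom A B), f ;; zero B C = zero A C;
  comp_addl : forall A B C (f f' : hom A B) (g : hom B C),
      add f f' ;; g = add (f ;; g) (f' ;; g);
  comp_addr : forall A B C (f : hom A B) (g g' : hom B C),
      f ;; add g g' = add (f ;; g) (f ;; g');
  tens_0l : forall A A' B B' (g : hom B B'),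
      tensm M (zero A A') g = zero (tens M A B) (tens M A' B');
  tens_0r : forall A A' B B' (f : hom A A'),
      tensm M f (zero B B') = zero (tens M A B) (tens M A' B');
  tens_addl : forall A A' B B' (f f' : hom A A') (g : hom B B'),
      tensm M (add f f') g = add (tensm M f g) (tensm M f' g);
  tens_addr : forall A A' B B' (f : hom A A') (g g' : hom B B'),
      tensm M f (add g g') = add (tensm M f g) (tensm M f g')
}.
Arguments zero {L M} _ _ _.
Arguments add {L M} _ {A B} _ _.

Record FinProd (L : Cat) := {
  bprod : ob L -> ob L -> ob L;
  bp1 : forall A B, hom (bprod A B) A;
  bp2 : forall A B, hom (bprod A B) B;
  bpair : forall C A B, hom C A -> hom C B -> hom C (bprod A B);
  bpair_p1 : forall C A B (f : hom C A) (g : hom C B), bpair f g ;; bp1 A B = f;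
  bpair_p2 : forall C A B (f : hom C A) (g : hom C B), bpair f g ;; bp2 A B = g;
  bpair_uniq : forall C A B (h : hom C (bprod A B)),
      h = bpair (h ;; bp1 A B) (h ;; bp2 A B);
  bterm : ob L;
  bbang : forall A, hom A bterm;
  bbang_uniq : forall A (h : hom A bterm), h = bbang A
}.
Arguments bprod {L} _ _ _.
Arguments bp1 {L} _ _ _.
Arguments bp2 {L} _ _ _.
Arguments bpair {L} _ {C A B} _ _.

Section Biproducts.
Context {L : Cat} {M : SMC L} (AL : Additive M) (PL : FinProd L).
Definition binj1 (A B : ob L) : hom A (bprod PL A B) := bpair PL (idm A) (zero AL A B).
Definition binj2 (A B : ob L) : hom B (bprod PL A B) := bpair PL (zero AL B A) (idm B).
End Biproducts.

Record LNL {C : Cat} (CC : Cartesian C) {L : Cat} (M : SMC L) := {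
  Fn : Functor C L;
  Un : Functor L C;
  eta : forall X, hom X (fob Un (fob Fn X));
  eps : forall A, hom (fob Fn (fob Un A)) A;
  eta_nat : forall X Y (h : hom X Y), h ;; eta Y = eta X ;; fmap Un (fmap Fn h);
  eps_nat : forall A B (k : hom A B), fmap Fn (fmap Un k) ;; eps B = eps A ;; k;
  triangle1 : forall X, fmap Fn (eta X) ;; eps (fob Fn X) = idm (fob Fn X);
  triangle2 : forall A, eta (fob Un A) ;; fmap Un (eps A) = idm (fob Un A);
  mF : forall X Y, hom (tens M (fob Fn X) (fob Fn Y)) (fob Fn (cprod CC X Y));
  mF_inv : forall X Y, hom (fob Fn (cprod CC X Y)) (tens M (fob Fn X) (fob Fn Y));
  mF_iso1 : forall X Y, mF X Y ;; mF_inv X Y = idm _;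
  mF_iso2 : forall X Y, mF_inv X Y ;; mF X Y = idm _;
  mF1 : hom (unit M) (fob Fn (cterm CC));
  mF1_inv : hom (fob Fn (cterm CC)) (unit M);
  mF1_iso1 : mF1 ;; mF1_inv = idm _;
  mF1_iso2 : mF1_inv ;; mF1 = idm _;
  mF_nat : forall X X' Y Y' (f : hom X X') (g : hom Y Y'),
      tensm M (fmap Fn f) (fmap Fn g) ;; mF X' Y' = mF X Y ;; fmap Fn (cfprod CC f g);
  mF_assoc : forall X Y Z,
      tensm M (mF X Y) (idm (fob Fn Z)) ;; mF (cprod CC X Y) Z ;; fmap Fn (cassoc CC X Y Z)
      = idc (assoc_ob M _ _ _) ;; tensm M (idm (fob Fn X)) (mF Y Z) ;; mF X (cprod CC Y Z);
  mF_lunit : forall X,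
      tensm M mF1 (idm (fob Fn X)) ;; mF (cterm CC) X ;; fmap Fn (cp2 CC _ X)
      = idc (lunit_ob M _);
  mF_runit : forall X,
      tensm M (idm (fob Fn X)) mF1 ;; mF X (cterm CC) ;; fmap Fn (cp1 CC X _)
      = idc (runit_ob M _);
  mF_sym : forall X Y, mF X Y ;; fmap Fn (cswap CC X Y) = sym M _ _ ;; mF Y X;
  nU : forall A B, hom (cprod CC (fob Un A) (fob Un B)) (fob Un (tens M A B));
  nU1 : hom (cterm CC) (fob Un (unit M));
  nU_nat : forall A A' B B' (f : hom A A') (g : hom B B'),
      cfprod CC (fmap Un f) (fmap Un g) ;; nU A' B' = nU A B ;; fmap Un (tensm M f g);
  nU_assoc : forall A B D,
      cfprod CC (nU A B) (idm (fob Un D)) ;; nU (tens M A B) D ;; fmap Un (idc (assoc_ob M A B D))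
      = cassoc CC _ _ _ ;; cfprod CC (idm (fob Un A)) (nU B D) ;; nU A (tens M B D);
  nU_lunit : forall A,
      cfprod CC nU1 (idm (fob Un A)) ;; nU (unit M) A ;; fmap Un (idc (lunit_ob M A))
      = cp2 CC _ _;
  nU_runit : forall A,
      cfprod CC (idm (fob Un A)) nU1 ;; nU A (unit M) ;; fmap Un (idc (runit_ob M A))
      = cp1 CC _ _;
  nU_sym : forall A B, nU A B ;; fmap Un (sym M A B) = cswap CC _ _ ;; nU B A;
  eta_mon : forall X Y,
      cfprod CC (eta X) (eta Y) ;; nU (fob Fn X) (fob Fn Y) ;; fmap Un (mF X Y)
      = eta (cprod CC X Y);
  eta_mon1 : nU1 ;; fmap Un mF1 = eta (cterm CC);
  eps_mon : forall A B,
      mF (fob Un A) (fob Un B) ;; fmap Fn (nU A B) ;; eps (tens M A B)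
      = tensm M (eps A) (eps B);
  eps_mon1 : mF1 ;; fmap Fn nU1 ;; eps (unit M) = idm (unit M)
}.
Arguments Fn {C CC L M} _.
Arguments Un {C CC L M} _.
Arguments eta {C CC L M} _ _.
Arguments eps {C CC L M} _ _.
Arguments mF {C CC L M} _ _ _.
Arguments mF_inv {C CC L M} _ _ _.
Arguments mF1 {C CC L M} _.
Arguments mF1_inv {C CC L M} _.
Arguments nU {C CC L M} _ _ _.
Arguments nU1 {C CC L M} _.

Section LS.
Context {C : Cat} {CC : Cartesian C} {L : Cat} {M : SMC L} (N : LNL CC M).

Local Notation F := (fob (Fn N)).
Local Notation U := (fob (Un N)).

Definition cX (X : ob C) : hom (F X) (tens M (F X) (F X)) :=
  fmap (Fn N) (cdiag CC X) ;; mF_inv N X X.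
Definition wX (X : ob C) : hom (F X) (unit M) :=
  fmap (Fn N) (cbang CC X) ;; mF1_inv N.

Record LSHom (X : ob C) (A : ob L) (Y : ob C) (B : ob L) := mkLS {
  lsf : hom X Y;
  lsu : hom (tens M (F X) A) B
}.

Definition LScomp {X A Y B Z D} (h : LSHom X A Y B) (k : LSHom Y B Z D) : LSHom X A Z D :=
  mkLS (lsf h ;; lsf k)
       (tensm M (cX X) (idm A) ;; idc (assoc_ob M (F X) (F X) A)
        ;; tensm M (fmap (Fn N) (lsf h)) (lsu h) ;; lsu k).

Definition LSid (X : ob C) (A : ob L) : LSHom X A X A :=
  mkLS (idm X) (tensm M (wX X) (idm A) ;; idc (lunit_ob M A)).

Definition reindex {X' X : ob C} (h : hom X' X) {B B' : ob L}
  (v : hom (tens M (F X) B) B') : LSHom X' B X' B' :=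
  mkLS (idm X') (tensm M (fmap (Fn N) h) (idm B) ;; v).

Definition compr {X A Y B} (h : LSHom X A Y B)
  : hom (cprod CC X (U A)) (cprod CC Y (U B)) :=
  cpair CC (cp1 CC X (U A) ;; lsf h)
           (cfprod CC (eta N X) (idm (U A)) ;; nU N (F X) A ;; fmap (Un N) (lsu h)).

Definition Wk {X A Y B} (h : LSHom X A Y B)
  : LSHom (cprod CC X (U A)) A (cprod CC Y (U B)) B :=
  mkLS (compr h) (tensm M (fmap (Fn N) (cp1 CC X (U A))) (idm A) ;; lsu h).

Definition castLS_src {X A A' Y B} (e : A = A') (h : LSHom X A Y B) : LSHom X A' Y B :=
  match e in _ = A'' return LSHom X A'' Y B with eq_refl => h end.
Definition castLS_tgt {X A Y B B'} (e : B = B') (h : LSHom X A Y B) : LSHom X A Y B' :=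
  match e in _ = B'' return LSHom X A Y B'' with eq_refl => h end.

Section WithBiproducts.
Context (AL : Additive M) (PL : FinProd L).

Definition LSpair {Z D X A Y B} (h : LSHom Z D X A) (k : LSHom Z D Y B)
  : LSHom Z D (cprod CC X Y) (bprod PL A B) :=
  mkLS (cpair CC (lsf h) (lsf k)) (bpair PL (lsu h) (lsu k)).

Definition LSinj2 (X : ob C) (A B : ob L) : LSHom X B X (bprod PL A B) :=
  mkLS (idm X) (tensm M (wX X) (binj2 AL PL A B) ;; idc (lunit_ob M _)).
End WithBiproducts.
End LS.

Arguments LSHom {C CC L M} N X A Y B.
Arguments lsf {C CC L M N X A Y B} _.
Arguments lsu {C CC L M N X A Y B} _.
Arguments mkLS {C CC L M} N {X A Y B} _ _.

(** * Generalised differential Seely categories.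
    The functor T : C -> LS(C) with ls ∘ T = id is given by its object part
    T(X) = (X, lam X) and the second components Tm h of T(h) = (h, Tm h). *)
Record GDSC {C : Cat} {CC : Cartesian C} {L : Cat} {M : SMC L} (N : LNL CC M)
  (AL : Additive M) (PL : FinProd L) := {
  lam : ob C -> ob L;
  Tm : forall X Y (h : hom X Y), hom (tens M (fob (Fn N) X) (lam X)) (lam Y);
  T_id : forall X, mkLS N (idm X) (Tm (idm X)) = LSid N X (lam X);
  T_comp : forall X Y Z (h : hom X Y) (k : hom Y Z),
      mkLS N (h ;; k) (Tm (h ;; k)) = LScomp (mkLS N h (Tm h)) (mkLS N k (Tm k));
  phi_inv : forall X Y,
      LSHom N (cprod CC X Y) (bprod PL (lam X) (lam Y)) (cprod CC X Y) (lam (cprod CC X Y));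
  phi_iso1 : forall X Y,
      LScomp (LSpair PL (mkLS N (cp1 CC X Y) (Tm (cp1 CC X Y)))
                        (mkLS N (cp2 CC X Y) (Tm (cp2 CC X Y))))
             (phi_inv X Y)
      = LSid N _ _;
  phi_iso2 : forall X Y,
      LScomp (phi_inv X Y)
             (LSpair PL (mkLS N (cp1 CC X Y) (Tm (cp1 CC X Y)))
                        (mkLS N (cp2 CC X Y) (Tm (cp2 CC X Y))))
      = LSid N _ _;
  lam_U : forall A, lam (fob (Un N) A) = A;
  t3 : forall X A Y B (h : LSHom N X A Y B),
      LScomp (Wk h)
        (castLS_src (lam_U B)
           (LScomp (LSinj2 N AL PL (cprod CC Y (fob (Un N) B)) (lam Y) (lam (fob (Un N) B)))
                   (phi_inv Y (fob (Un N) B))))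
      = castLS_src (lam_U A)
          (LScomp (LScomp (LSinj2 N AL PL (cprod CC X (fob (Un N) A)) (lam X) (lam (fob (Un N) A)))
                          (phi_inv X (fob (Un N) A)))
                  (mkLS N (compr h) (Tm (compr h))))
}.
Arguments lam {C CC L M N AL PL} _ _.
Arguments Tm {C CC L M N AL PL} _ {X Y} _.
Arguments phi_inv {C CC L M N AL PL} _ _ _.
Arguments lam_U {C CC L M N AL PL} _ _.

Section GDSCDefs.
Context {C : Cat} {CC : Cartesian C} {L : Cat} {M : SMC L} {N : LNL CC M}
  {AL : Additive M} {PL : FinProd L} (G : GDSC N AL PL).

Definition Tf {X Y} (h : hom X Y) : LSHom N X (lam G X) Y (lam G Y) := mkLS N h (Tm G h).

Definition i2 (X Y : ob C) : LSHom N (cprod CC X Y) (lam G Y) (cprod CC X Y) (lam G (cprod CC X Y)) :=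
  LScomp (LSinj2 N AL PL (cprod CC X Y) (lam G X) (lam G Y)) (phi_inv G X Y).

Definition Dif {X Y} (h : hom X Y) : LSHom N X (lam G X) X (lam G Y) := mkLS N (idm X) (Tm G h).

Definition D2 {X Y Z} (h : hom (cprod CC X Y) Z)
  : LSHom N (cprod CC X Y) (lam G Y) (cprod CC X Y) (lam G Z) :=
  LScomp (i2 X Y) (Dif h).
End GDSCDefs.

(* By functoriality of T, T(g) = T(⦃(f,u)⦄);T(π2), and axiom (t.3) moves the
   injection i2 past T(⦃(f,u)⦄): i2;T(g) = W(f,u);i2;T(π2).  Since φ;π2 = T(π2)
   and i2 = ι2;φ^{-1}, the composite i2;T(π2) collapses to ι2;π2, the lift of the
   projection π2 with trivial linear part.  Hence the linear part of i2;T(g) is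
   that of W(f,u), namely (F(π1)⊗id);u.  Finally D2(g) = i2;D(g) and i2;T(g)
   have the same linear part, because the linear part of a composite in LS(C)
   does not depend on the base map of its second factor.  The reassociations
   used here rest on (F X, c_X, w_X) being a comonoid, transported from the
   diagonal of C through the strong monoidal F. *)
From Stdlib Require Import Setoid ProofIrrelevance.

Lemma comp_cancel_l {K : Cat} {a b c : ob K} (f : hom a b) (g : hom b a) (k : hom a c) :
  f ;; g = idm a -> f ;; (g ;; k) = k.
Proof. intro fgK. rewrite <- comp_assoc, fgK. apply comp_idl. Qed.

Section CartesianFacts.
Context {C : Cat} (CC : Cartesian C).

Lemma cpair_comp {W Z X Y : ob C} (h : hom W Z) (f : hom Z X) (g : hom Z Y) :
  h ;; cpair CC f g = cpair CC (h ;; f) (h ;; g).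
Proof. rewrite (cpair_uniq (h ;; _)), !comp_assoc, cpair_p1, cpair_p2. reflexivity. Qed.

Lemma cpair_proj (X Y : ob C) : cpair CC (cp1 CC X Y) (cp2 CC X Y) = idm _.
Proof. rewrite (cpair_uniq (idm _)), !comp_idl. reflexivity. Qed.

Ltac cnorm :=
  repeat (rewrite <- ?comp_assoc;
          rewrite ?cpair_comp, ?comp_idl, ?comp_idr, ?cpair_p1, ?cpair_p2).

Lemma cdiag_nat {X Y : ob C} (f : hom X Y) : f ;; cdiag CC Y = cdiag CC X ;; cfprod CC f f.
Proof. unfold cdiag, cfprod. cnorm. reflexivity. Qed.

Lemma cdiag_coassoc (X : ob C) :
  cdiag CC X ;; cfprod CC (cdiag CC X) (idm X) ;; cassoc CC X X X
  = cdiag CC X ;; cfprod CC (idm X) (cdiag CC X).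
Proof. unfold cdiag, cfprod, cassoc. cnorm. reflexivity. Qed.

Lemma cdiag_counit (X : ob C) :
  cdiag CC X ;; cfprod CC (cbang CC X) (idm X) ;; cp2 CC _ X = idm X.
Proof. unfold cdiag, cfprod. cnorm. reflexivity. Qed.
End CartesianFacts.

Section StrictIdentities.
Context {L : Cat}.

(* [ob L] is a type, so equal object equalities need proof irrelevance. *)
Lemma idc_irrelevant {a b : ob L} (e1 e2 : a = b) : idc e1 = idc e2.
Proof. rewrite (proof_irrelevance _ e1 e2). reflexivity. Qed.

Lemma idc_comp {a b c : ob L} (e1 : a = b) (e2 : b = c) :
  idc e1 ;; idc e2 = idc (eq_trans e1 e2).
Proof. destruct e2. apply comp_idr. Qed.

Context (M : SMC L).

Lemma tensm_idc_l {a b : ob L} (e : a = b) (c : ob L) :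
  tensm M (idc e) (idm c) = idc (f_equal (fun z => tens M z c) e).
Proof. destruct e. apply tens_id. Qed.

Lemma tensm_idc_r {a b : ob L} (e : a = b) (c : ob L) :
  tensm M (idm c) (idc e) = idc (f_equal (fun z => tens M c z) e).
Proof. destruct e. apply tens_id. Qed.

Lemma tensm_comp_r {a a' b b' b'' : ob L} (f : hom a a') (x : hom b b') (y : hom b' b'') :
  tensm M f (x ;; y) = tensm M (idm a) x ;; tensm M f y.
Proof. rewrite <- tens_comp, comp_idl. reflexivity. Qed.
End StrictIdentities.

Section ComonoidFX.
Context {C : Cat} {CC : Cartesian C} {L : Cat} {M : SMC L} (N : LNL CC M).
Local Notation F := (fob (Fn N)).
Local Notation Fm := (fmap (Fn N)).

Lemma mF_inv_nat {X X' Y Y'} (f : hom X X') (g : hom Y Y') :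
  mF_inv N X Y ;; tensm M (Fm f) (Fm g) = Fm (cfprod CC f g) ;; mF_inv N X' Y'.
Proof.
  transitivity (mF_inv N X Y ;; (tensm M (Fm f) (Fm g) ;; mF N X' Y') ;; mF_inv N X' Y').
  - rewrite !comp_assoc, mF_iso1, comp_idr. reflexivity.
  - rewrite mF_nat, <- !comp_assoc, mF_iso2, comp_idl. reflexivity.
Qed.

Lemma mF_inv_assoc X Y Z :
  Fm (cassoc CC X Y Z) ;; mF_inv N X (cprod CC Y Z) ;; tensm M (idm _) (mF_inv N Y Z)
  = mF_inv N (cprod CC X Y) Z ;; tensm M (mF_inv N X Y) (idm _) ;; idc (assoc_ob M _ _ _).
Proof.
  transitivity (mF_inv N (cprod CC X Y) Z ;; tensm M (mF_inv N X Y) (idm _) ;;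
     (tensm M (mF N X Y) (idm (F Z)) ;; mF N (cprod CC X Y) Z ;; Fm (cassoc CC X Y Z))
     ;; mF_inv N X (cprod CC Y Z) ;; tensm M (idm _) (mF_inv N Y Z)).
  - rewrite !comp_assoc, (comp_cancel_l (tensm M (mF_inv N X Y) (idm _))).
    + rewrite comp_cancel_l by apply mF_iso2. reflexivity.
    + rewrite <- tens_comp, mF_iso2, comp_idl, tens_id. reflexivity.
  - rewrite mF_assoc, !comp_assoc. do 3 f_equal.
    rewrite comp_cancel_l by apply mF_iso1.
    rewrite <- tens_comp, mF_iso1, comp_idl, tens_id, comp_idr. reflexivity.
Qed.

Lemma cX_nat {X Y} (f : hom X Y) : Fm f ;; cX N Y = cX N X ;; tensm M (Fm f) (Fm f).
Proof.
  unfold cX. rewrite comp_assoc, mF_inv_nat, <- !comp_assoc, <- !fmap_comp, cdiag_nat.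
  reflexivity.
Qed.

Lemma wX_nat {X Y} (f : hom X Y) : Fm f ;; wX N Y = wX N X.
Proof. unfold wX. rewrite <- comp_assoc, <- fmap_comp, (cbang_uniq (f ;; _)). reflexivity. Qed.

Lemma cX_counit X :
  cX N X ;; tensm M (wX N X) (idm (F X)) ;; idc (lunit_ob M (F X)) = idm (F X).
Proof.
  unfold cX, wX. rewrite <- (mF_lunit N X), !comp_assoc.
  assert (collapse_unit : tensm M (Fm (cbang CC X) ;; mF1_inv N) (idm (F X))
            ;; tensm M (mF1 N) (idm (F X))
          = tensm M (Fm (cbang CC X)) (Fm (idm X))).
  { rewrite <- tens_comp, comp_assoc, mF1_iso2, comp_idr, comp_idl, fmap_id. reflexivity. }
  rewrite <- (comp_assoc (tensm M _ _) (tensm M _ _)), collapse_unit.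
  rewrite <- !comp_assoc, (comp_assoc _ (mF_inv N _ _)), mF_inv_nat.
  rewrite !comp_assoc, comp_cancel_l by apply mF_iso2.
  rewrite <- !fmap_comp, <- comp_assoc, cdiag_counit, fmap_id. reflexivity.
Qed.

Lemma cX_coassoc X :
  cX N X ;; tensm M (cX N X) (idm _) ;; idc (assoc_ob M _ _ _)
  = cX N X ;; tensm M (idm _) (cX N X).
Proof.
  unfold cX. rewrite <- (comp_idl (idm (F X))), !tens_comp, <- (fmap_id (Fn N) X).
  rewrite <- !comp_assoc, (comp_assoc _ (mF_inv N _ _)), (comp_assoc _ (mF_inv N X X)),
    !mF_inv_nat, !fmap_id.
  transitivity (Fm (cdiag CC X) ;; Fm (cfprod CC (cdiag CC X) (idm X)) ;;
    (mF_inv N _ X ;; tensm M (mF_inv N X X) (idm _) ;; idc (assoc_ob M _ _ _))).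
  - rewrite !comp_assoc. reflexivity.
  - rewrite <- mF_inv_assoc, <- !comp_assoc, <- !fmap_comp, cdiag_coassoc, !fmap_comp,
      !comp_assoc.
    reflexivity.
Qed.

Lemma cX_counit_tens X A :
  tensm M (cX N X) (idm A) ;; idc (assoc_ob M _ _ _) ;; tensm M (wX N X) (idm (tens M (F X) A))
  ;; idc (lunit_ob M _) = idm _.
Proof.
  rewrite <- (tens_id M (F X) A).
  rewrite (comp_assoc _ (idc _)), <- (assoc_nat M (wX N X) (idm (F X)) (idm A)).
  rewrite <- !comp_assoc, <- tens_comp, comp_idl, !comp_assoc, idc_comp.
  rewrite (idc_irrelevant _ (f_equal (fun z => tens M z A) (lunit_ob M (F X)))), <- tensm_idc_l.
  rewrite <- tens_comp, comp_idl, cX_counit, tens_id. reflexivity.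
Qed.

Lemma cX_coassoc_tens X A :
  tensm M (cX N X) (idm A) ;; idc (assoc_ob M _ _ _) ;; tensm M (cX N X) (idm (tens M (F X) A))
  ;; idc (assoc_ob M _ _ _)
  = tensm M (cX N X) (idm A) ;; idc (assoc_ob M _ _ _)
    ;; tensm M (idm (F X)) (tensm M (cX N X) (idm A))
    ;; tensm M (idm (F X)) (idc (assoc_ob M _ _ _)).
Proof.
  rewrite <- (tens_id M (F X) A).
  rewrite (comp_assoc _ (idc _) (tensm M (cX N X) _)),
    <- (assoc_nat M (cX N X) (idm (F X)) (idm A)).
  rewrite (comp_assoc _ (idc _) (tensm M (idm (F X)) _)),
    <- (assoc_nat M (idm (F X)) (cX N X) (idm A)).
  rewrite <- !comp_assoc, <- !tens_comp, !comp_idl, <- cX_coassoc.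
  rewrite <- (comp_idl (idm A)) at 2. rewrite tens_comp, !comp_assoc. f_equal.
  rewrite tensm_idc_l, tensm_idc_r, !idc_comp. apply idc_irrelevant.
Qed.
End ComonoidFX.

Section LSCategory.
Context {C : Cat} {CC : Cartesian C} {L : Cat} {M : SMC L} (N : LNL CC M).
Local Notation Fm := (fmap (Fn N)).

Lemma LS_ext {X A Y B} (h k : LSHom N X A Y B) : lsf h = lsf k -> lsu h = lsu k -> h = k.
Proof. destruct h, k; simpl; intros; subst; reflexivity. Qed.

(* The image (f, w ⊗ v) of a pair (f, v) of C × L; [LSid], [LSinj2] and the
   projections of LS(C) are of this form. *)
Definition LSlift {X A Y B} (f : hom X Y) (v : hom A B) : LSHom N X A Y B :=
  mkLS N f (tensm M (wX N X) v ;; idc (lunit_ob M B)).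

Lemma lunit_tensm_comp {X A D E} (w : hom X (unit M)) (v : hom A D) (k : hom D E) :
  tensm M w v ;; idc (lunit_ob M D) ;; k = tensm M w (v ;; k) ;; idc (lunit_ob M E).
Proof. rewrite comp_assoc, <- lunit_nat, <- comp_assoc, <- tens_comp, comp_idr. reflexivity. Qed.

Lemma lsu_LScomp_lift {X A Y B Z D} (h : LSHom N X A Y B) (k : hom Y Z) (v : hom B D) :
  lsu (LScomp h (LSlift k v)) = lsu h ;; v.
Proof.
  destruct h as [f u]. unfold LScomp, LSlift; simpl.
  rewrite <- comp_assoc, (comp_assoc _ (tensm M (Fm f) u)), <- tens_comp, wX_nat.
  rewrite <- (comp_idr (wX N X)), <- (comp_idl (u ;; v)), tens_comp.
  rewrite !comp_assoc, lunit_nat, <- !comp_assoc, cX_counit_tens, comp_idl. reflexivity.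
Qed.

Lemma LScomp_lift {X A Y B Z D} (f : hom X Y) (v : hom A B) (g : hom Y Z) (w : hom B D) :
  LScomp (LSlift f v) (LSlift g w) = LSlift (f ;; g) (v ;; w).
Proof.
  apply LS_ext; [reflexivity |].
  rewrite lsu_LScomp_lift. apply lunit_tensm_comp.
Qed.

Lemma LScomp_assoc {X A Y B Z D W E}
  (h : LSHom N X A Y B) (k : LSHom N Y B Z D) (l : LSHom N Z D W E) :
  LScomp (LScomp h k) l = LScomp h (LScomp k l).
Proof.
  destruct h as [f u], k as [g v], l as [q w]. unfold LScomp; simpl.
  apply LS_ext; simpl; [apply comp_assoc |].
  enough (two_copies : tensm M (cX N X) (idm A) ;; idc (assoc_ob M _ _ _) ;; tensm M (Fm f) u
       ;; tensm M (cX N Y) (idm B) ;; idc (assoc_ob M _ _ _) ;; tensm M (Fm g) v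
     = tensm M (cX N X) (idm A) ;; idc (assoc_ob M _ _ _) ;; tensm M (Fm (f ;; g))
        (tensm M (cX N X) (idm A) ;; idc (assoc_ob M _ _ _) ;; tensm M (Fm f) u ;; v)).
  { rewrite <- two_copies, !comp_assoc. reflexivity. }
  rewrite (comp_assoc _ (tensm M (Fm f) u)), <- tens_comp, cX_nat, comp_idr.
  rewrite <- (comp_idl u) at 1. rewrite tens_comp.
  rewrite <- !comp_assoc, (comp_assoc _ (tensm M (tensm M _ _) u)), assoc_nat.
  rewrite <- !comp_assoc, (comp_assoc _ (tensm M (Fm f) (tensm M (Fm f) u))), <- tens_comp.
  rewrite fmap_comp, !comp_assoc, (tensm_comp_r M _ (tensm M (cX N X) (idm A))),
    (tensm_comp_r M _ (idc (assoc_ob M _ _ _))).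
  rewrite <- !comp_assoc, cX_coassoc_tens. reflexivity.
Qed.

Lemma lsf_castLS {X A A' Y B B'} (e : B = B') (e' : A = A') (h : LSHom N X A Y B) :
  lsf (castLS_tgt e (castLS_src e' h)) = lsf h.
Proof. destruct e, e'. reflexivity. Qed.

Lemma lsu_castLS {X A A' Y Y' B B'} (e : B = B') (e' : A = A')
  (h : LSHom N X A Y B) (k : LSHom N X A Y' B) :
  lsu h = lsu k -> lsu (castLS_tgt e (castLS_src e' h)) = lsu (castLS_tgt e (castLS_src e' k)).
Proof. destruct e, e'. auto. Qed.

Lemma castLS_src_comp {X A A' Y B Z D} (e : A = A')
  (h : LSHom N X A Y B) (k : LSHom N Y B Z D) :
  castLS_src e (LScomp h k) = LScomp (castLS_src e h) k.
Proof. destruct e. reflexivity. Qed.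

Lemma castLS_tgt_comp {X A Y B Z D D'} (e : D = D')
  (h : LSHom N X A Y B) (k : LSHom N Y B Z D) :
  castLS_tgt e (LScomp h k) = LScomp h (castLS_tgt e k).
Proof. destruct e. reflexivity. Qed.

Lemma castLS_lift_id {X Y : ob C} {Z Z' : ob L} (e : Z = Z') (f : hom X Y) :
  castLS_tgt e (castLS_src e (LSlift f (idm Z))) = LSlift f (idm Z').
Proof. destruct e. reflexivity. Qed.
End LSCategory.

Section PartialDifferential.
Context {C : Cat} {CC : Cartesian C} {L : Cat} {M : SMC L} {N : LNL CC M}
  {AL : Additive M} {PL : FinProd L} (G : GDSC N AL PL).
Local Notation U := (fob (Un N)).

Lemma lsf_phi_inv X Y : lsf (phi_inv G X Y) = idm _.
Proof.
  pose proof (f_equal lsf (phi_iso1 G X Y)) as lsf_iso. simpl in lsf_iso.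
  rewrite cpair_proj, comp_idl in lsf_iso. exact lsf_iso.
Qed.

Lemma lsf_D2 {X Y Z} (h : hom (cprod CC X Y) Z) : lsf (D2 G h) = idm _.
Proof. unfold D2, i2, LScomp; simpl. rewrite lsf_phi_inv, !comp_idl. reflexivity. Qed.

Lemma LSpair_proj2 {Z D X Y} (h : LSHom N Z D X (lam G X)) (k : LSHom N Z D Y (lam G Y)) :
  LScomp (LSpair PL h k) (LSlift N (cp2 CC X Y) (bp2 PL _ _)) = k.
Proof.
  apply LS_ext; [apply cpair_p2 |].
  rewrite lsu_LScomp_lift. apply bpair_p2.
Qed.

Lemma i2_T_proj2 Y Z :
  LScomp (i2 G Y Z) (Tf G (cp2 CC Y Z)) = LSlift N (cp2 CC Y Z) (idm (lam G Z)).
Proof.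
  rewrite <- (LSpair_proj2 (Tf G (cp1 CC Y Z)) (Tf G (cp2 CC Y Z))).
  unfold i2, Tf. rewrite !LScomp_assoc, <- (LScomp_assoc _ (phi_inv G Y Z)), phi_iso2.
  change (LSid N ?X ?A) with (LSlift N (idm X) (idm A)).
  unfold LSinj2. fold (LSlift N (idm (cprod CC Y Z)) (binj2 AL PL (lam G Y) (lam G Z))).
  rewrite !LScomp_lift, !comp_idl. unfold binj2. rewrite bpair_p2. reflexivity.
Qed.

Lemma i2_T_compr_proj2 {X A Y B} (fu : LSHom N X A Y B) :
  castLS_tgt (lam_U G B) (castLS_src (lam_U G A)
    (LScomp (i2 G X (U A)) (Tf G (compr fu ;; cp2 CC Y (U B)))))
  = LScomp (Wk fu) (LSlift N (cp2 CC Y (U B)) (idm B)).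
Proof.
  unfold Tf. rewrite T_comp, <- LScomp_assoc, castLS_src_comp.
  unfold i2. rewrite <- t3, LScomp_assoc, <- castLS_src_comp.
  fold (i2 G Y (U B)). fold (Tf G (cp2 CC Y (U B))).
  rewrite i2_T_proj2, castLS_tgt_comp, castLS_lift_id. reflexivity.
Qed.
End PartialDifferential.

Theorem lemma4p17
  (C : Cat) (CC : Cartesian C) (L : Cat) (M : SMC L) (N : LNL CC M)
  (AL : Additive M) (PL : FinProd L) (G : GDSC N AL PL)
  (X : ob C) (A : ob L) (Y : ob C) (B : ob L) (fu : LSHom N X A Y B)
  (g : hom (cprod CC X (fob (Un N) A)) (fob (Un N) B)) :
  g = compr fu ;; cp2 CC Y (fob (Un N) B) ->
  castLS_tgt (lam_U G B) (castLS_src (lam_U G A) (D2 G g))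
  = reindex (cp1 CC X (fob (Un N) A)) (lsu fu).
Proof.
  intros ->. apply LS_ext.
  - rewrite lsf_castLS. apply lsf_D2.
  - rewrite (lsu_castLS N _ _ _ (LScomp (i2 G X _) (Tf G (compr fu ;; cp2 CC Y _)))) by reflexivity.
    rewrite i2_T_compr_proj2, lsu_LScomp_lift. apply comp_idr.
Qed.
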